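(* Let $p=(p_1,p_2,p_3,p_4)$ be an ordered quadruple of distinct points of $\partial\mathbf H^2_{\mathbb C}$ and let $(X_1,X_2,A)=\bigl(X(p_1,p_2,p_3,p_4),X(p_1,p_3,p_2,p_4),\mathbb A(p_1,p_2,p_3)\bigr)$. Then some triple $(p_i,p_j,p_k)$, $i<j<k$, lies on a chain if and only if $(X_1,X_2,A)$ belongs to at least one of the sets $\mathbb S_{123},\mathbb S_{124},\mathbb S_{134},\mathbb S_{234}$. Moreover, all four points lie on a common chain if and only if $(X_1,X_2,A)$ belongs to at least two of these sets.
   Context: $\mathbb C^{2,1}$ is $\mathbb C^3$ with Hermitian form $\langle Z,W\rangle=z_1\overline{w}_3+z_2\overline{w}_2+z_3\overline{w}_1$; $\partial\mathbf H^2_{\mathbb C}$ is the set of null lines in $\mathbb P\mathbb C^2$. A chain is the boundary of a complex geodesic (intersection of $\partial\mathbf H^2_{\mathbb C}$ with the projectivization of a 2-dimensional complex subspace of signature $(1,1)$). With null lifts $P_i$: $X(p_1,p_2,p_3,p_4)=\dfrac{\langle P_3,P_1\rangle\langle P_4,P_2\rangle}{\langle P_4,P_1\rangle\langle P_3,P_2\rangle}$, $\mathbb A(p_1,p_2,p_3)=\arg\bigl(-\langle P_1,P_2\rangle\langle P_2,P_3\rangle\langle P_3,P_1\rangle\bigr)$. The Cartan varieties in $\mathbb C^2\times\mathbb R$ are $\mathbb S_{123}=\{\mathrm{Re}(e^{iA})=0\}$, $\mathbb S_{124}=\{\mathrm{Re}(\overline{X}_1e^{iA})=0\}$, $\mathbb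 S_{134}=\{\mathrm{Re}(\overline{X}_2e^{-iA})=0\}$, $\mathbb S_{234}=\{\mathrm{Re}(X_1\overline{X}_2e^{-iA})=0\}$. *)

From HB Require Import structures.
From mathcomp Require Import all_boot all_order all_algebra.
From mathcomp Require Import complex.
From mathcomp Require Import reals trigo.
Set Implicit Arguments. Unset Strict Implicit. Unset Printing Implicit Defensive.
Import Order.TTheory GRing.Theory Num.Theory ComplexField.
Local Open Scope ring_scope.
Local Open Scope complex_scope.

Section Defs.
Variable R : realType.
Notation C := (R[i]).

(* vectors of C^{2,1} = C^3 *)
Definition vec3 := (C * C * C)%type.
Definition v1 (Z : vec3) : C := Z.1.1.
Definition v2 (Z : vec3) : C := Z.1.2.
Definition v3 (Z : vec3) : C := Z.2.

Definition vscale (c : C) (Z : vec3) : vec3 := (c * v1 Z, c * v2 Z, c * v3 Z).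
Definition vadd (Z W : vec3) : vec3 := (v1 Z + v1 W, v2 Z + v2 W, v3 Z + v3 W).

Definition herm (Z W : vec3) : C :=
  v1 Z * (v3 W)^* + v2 Z * (v2 W)^* + v3 Z * (v1 W)^*.

(* Z is a null lift of a point of the boundary of H^2_C *)
Definition null_lift (Z : vec3) : Prop := Z <> (0, 0, 0) /\ herm Z Z = 0.

(* the points represented by the (nonzero) lifts Z, W are distinct:
   Z, W span distinct complex lines *)
Definition distinct_pts (Z W : vec3) : Prop := ~ exists c : C, Z = vscale c W.

(* a chain: boundary of the complex geodesic given by a 2-dimensional complex
   subspace of signature (1,1), i.e. spanned by an orthogonal pair e1, e2
   with <e1,e1> > 0 and <e2,e2> < 0.  A boundary point lies on the chain iff
   its lift lies in the subspace. *)
Definition sig11_basis (e1 e2 : vec3) : Prop :=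
  herm e1 e2 = 0 /\ 0 < herm e1 e1 /\ herm e2 e2 < 0.
Definition in_span (e1 e2 Z : vec3) : Prop :=
  exists a b : C, Z = vadd (vscale a e1) (vscale b e2).
Definition on_chain3 (P Q S : vec3) : Prop :=
  exists e1 e2, sig11_basis e1 e2 /\ in_span e1 e2 P /\ in_span e1 e2 Q /\ in_span e1 e2 S.
Definition on_chain4 (P Q S T : vec3) : Prop :=
  exists e1 e2, sig11_basis e1 e2 /\ in_span e1 e2 P /\ in_span e1 e2 Q /\
    in_span e1 e2 S /\ in_span e1 e2 T.

Definition crossX (P1 P2 P3 P4 : vec3) : C :=
  herm P3 P1 * herm P4 P2 / (herm P4 P1 * herm P3 P2).

Definition expi (t : R) : C := (cos t +i* sin t).

Definition is_arg (w : C) (A : R) : Prop := w = `|w| * expi A.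

Definition cartanA_is (P1 P2 P3 : vec3) (A : R) : Prop :=
  is_arg (- (herm P1 P2 * herm P2 P3 * herm P3 P1)) A.

Definition S123 (X1 X2 : C) (A : R) : Prop := Re (expi A) = 0.
Definition S124 (X1 X2 : C) (A : R) : Prop := Re (X1^* * expi A) = 0.
Definition S134 (X1 X2 : C) (A : R) : Prop := Re (X2^* * expi (- A)) = 0.
Definition S234 (X1 X2 : C) (A : R) : Prop := Re (X1 * X2^* * expi (- A)) = 0.

End Defs.

From HB Require Import structures.
From mathcomp Require Import all_boot all_order all_algebra.
From mathcomp Require Import complex.
From mathcomp Require Import reals trigo.
From mathcomp Require Import ring.
Set Implicit Arguments. Unset Strict Implicit. Unset Printing Implicit Defensive.
Import Order.TTheory GRing.Theory Num.Theory ComplexField.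
Local Open Scope ring_scope.

(* Three (four) boundary points lie on a chain exactly when their lifts span a
   plane, i.e. when 3x3 determinants of lifts vanish.  For null lifts the Gram
   determinant of P, Q, S is both -|det(P,Q,S)|^2 and 2 Re <P,Q><Q,S><S,P>, so a
   triple is on a chain iff the real part of its Hermitian triple product
   vanishes.  Each Cartan variety S_ijk says exactly this for p_i, p_j, p_k: the
   cross-ratios and e^{iA} are built from the same Hermitian products, and the
   defining expression of S_ijk is a nonzero real multiple of the triple product
   of p_i, p_j, p_k.  Finally, two dependent triples among four points share two
   independent lifts, whose plane then contains all four. *)

Lemma Re_realMl_eq0 (K : numClosedFieldType) (r z : K) :
  r \is Num.real -> r != 0 -> 'Re (r * z) = 0 <-> 'Re z = 0.
Proof.
move=> r_real r0; rewrite ReMl //.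
by split => [/eqP|->]; [rewrite mulf_eq0 (negbTE r0) => /eqP | rewrite mulr0].
Qed.

Lemma Re_eq0 (K : numClosedFieldType) (z : K) : 'Re z = 0 <-> z + z^* = 0.
Proof.
rewrite ReE; split => [/eqP | ->]; last by rewrite mul0r.
by rewrite mulf_eq0 invr_eq0 pnatr_eq0 orbF => /eqP.
Qed.

Section HermitianForm.
Variable R : realType.
Implicit Types (P Q S T V : vec3 R) (a : R[i]).

Definition det3 P Q S : R[i] :=
  v1 P * (v2 Q * v3 S - v3 Q * v2 S) - v2 P * (v1 Q * v3 S - v3 Q * v1 S)
  + v3 P * (v1 Q * v2 S - v2 Q * v1 S).

Definition gram3 P Q S : R[i] :=
  herm P P * (herm Q Q * herm S S - herm Q S * herm S Q)
  - herm P Q * (herm Q P * herm S S - herm Q S * herm S P)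
  + herm P S * (herm Q P * herm S Q - herm Q Q * herm S P).

Definition triple P Q S : R[i] := herm P Q * herm Q S * herm S P.

Lemma vec3_eq P Q : v1 P = v1 Q -> v2 P = v2 Q -> v3 P = v3 Q -> P = Q.
Proof.
by case: P => [[? ?] ?]; case: Q => [[? ?] ?]; rewrite /v1 /v2 /v3 /= => -> -> ->.
Qed.

(* [herm] unfolded, with its conjugation seen through the [numClosedFieldType]
   structure of [R[i]] so that the [Num.conj] lemmas apply to it. *)
Lemma hermE P Q :
  herm P Q = v1 P * (v3 Q)^* + v2 P * (v2 Q)^* + v3 P * (v1 Q)^*.
Proof. by []. Qed.

Lemma herm_sym P Q : herm Q P = (herm P Q)^*.
Proof. by rewrite !hermE !(rmorphD, rmorphM) /= ?conjCK; ring. Qed.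

Lemma herm_addl P Q S : herm (vadd P Q) S = herm P S + herm Q S.
Proof. by rewrite !hermE /vadd /v1 /v2 /v3 /=; ring. Qed.

Lemma herm_addr P Q S : herm S (vadd P Q) = herm S P + herm S Q.
Proof. by rewrite !hermE /vadd /v1 /v2 /v3 /= !rmorphD; ring. Qed.

Lemma herm_scalel a P S : herm (vscale a P) S = a * herm P S.
Proof. by rewrite !hermE /vscale /v1 /v2 /v3 /=; ring. Qed.

Lemma herm_scaler a P S : herm S (vscale a P) = a^* * herm S P.
Proof. by rewrite !hermE /vscale /v1 /v2 /v3 /= !rmorphM; ring. Qed.

Lemma det3_swap23 P Q S : det3 P S Q = - det3 P Q S.
Proof. by rewrite /det3; ring. Qed.

Lemma det3_cycle P Q S : det3 Q S P = det3 P Q S.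
Proof. by rewrite /det3; ring. Qed.

(* The form has a Gram matrix of determinant -1 in the standard basis. *)
Lemma gram3E P Q S : gram3 P Q S = - (det3 P Q S * (det3 P Q S)^*).
Proof. by rewrite /gram3 /det3 !hermE !(rmorphB, rmorphD, rmorphM) /=; ring. Qed.

Lemma gram3_eq0 P Q S : gram3 P Q S = 0 <-> det3 P Q S = 0.
Proof.
by rewrite gram3E; split => [/eqP | ->]; rewrite ?mul0r ?oppr0 //
  oppr_eq0 mul_conjC_eq0 => /eqP.
Qed.

Lemma det3_in_span (e1 e2 : vec3 R) P Q S :
  in_span e1 e2 P -> in_span e1 e2 Q -> in_span e1 e2 S -> det3 P Q S = 0.
Proof.
move=> [a1 [b1 ->]] [a2 [b2 ->]] [a3 [b3 ->]].
by rewrite /det3 /vadd /vscale /v1 /v2 /v3 /=; ring.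
Qed.

Lemma colinear_of_det3_eq0 P Q : Q <> (0, 0, 0) ->
  det3 P Q (1, 0, 0) = 0 -> det3 P Q (0, 1, 0) = 0 -> det3 P Q (0, 0, 1) = 0 ->
  exists c, P = vscale c Q.
Proof.
case: P => [[p1 p2] p3]; case: Q => [[q1 q2] q3] Q0.
rewrite /det3 /v1 /v2 /v3 /= => e1 e2 e3.
have h12 : p1 * q2 = p2 * q1 by apply: subr0_eq; rewrite -e3; ring.
have h13 : p1 * q3 = p3 * q1 by apply: subr0_eq; rewrite -oppr0 -e2; ring.
have h23 : p2 * q3 = p3 * q2 by apply: subr0_eq; rewrite -e1; ring.
have ratio (a b c d : R[i]) : c != 0 -> a * d = b * c -> b = a / c * d.
  by move=> c0 h; rewrite mulrAC h mulfK.
rewrite /vscale /v1 /v2 /v3 /=.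
have [q10|q1nz] := eqVneq q1 0; last first.
  by exists (p1 / q1); congr (_, _, _); apply: ratio.
have [q20|q2nz] := eqVneq q2 0; last first.
  by exists (p2 / q2); congr (_, _, _); apply: ratio; rewrite // h12.
have [q30|q3nz] := eqVneq q3 0; last first.
  by exists (p3 / q3); congr (_, _, _); apply: ratio; rewrite // ?h13 ?h23.
by case: Q0; rewrite q10 q20 q30.
Qed.

Lemma det3_neq0_of_distinct P Q : Q <> (0, 0, 0) -> distinct_pts P Q ->
  exists V, det3 P Q V != 0.
Proof.
move=> Q0 PQ.
have [e1|] := eqVneq (det3 P Q (1, 0, 0)) 0; last by exists (1, 0, 0).
have [e2|] := eqVneq (det3 P Q (0, 1, 0)) 0; last by exists (0, 1, 0).
have [e3|] := eqVneq (det3 P Q (0, 0, 1)) 0; last by exists (0, 0, 1).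
by case: PQ; exact: colinear_of_det3_eq0.
Qed.

Lemma null_herm_neq0 P Q : null_lift P -> null_lift Q -> distinct_pts P Q ->
  herm P Q != 0.
Proof.
move=> [_ hP] [Q0 hQ] PQ; apply/eqP => hPQ.
have [V /eqP] := det3_neq0_of_distinct Q0 PQ; apply; apply/gram3_eq0.
by rewrite /gram3 (herm_sym P Q) hP hQ hPQ rmorph0; ring.
Qed.

Lemma null_det3_eq0 P Q S : herm P P = 0 -> herm Q Q = 0 -> herm S S = 0 ->
  det3 P Q S = 0 <-> 'Re (triple P Q S) = 0.
Proof.
move=> hP hQ hS; rewrite Re_eq0 -gram3_eq0.
suff -> : gram3 P Q S = triple P Q S + (triple P Q S)^* by [].
by rewrite /gram3 /triple (herm_sym P Q) (herm_sym Q S) (herm_sym S P) hP hQ hS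
  !rmorphM; ring.
Qed.

End HermitianForm.

Section Chains.
Variable R : realType.
Implicit Types (P Q S T V X Y Z : vec3 R).

Lemma in_span_l P Q : in_span P Q P.
Proof.
by exists 1, 0; apply: vec3_eq; rewrite /vadd /vscale /v1 /v2 /v3 /=; ring.
Qed.

Lemma in_span_r P Q : in_span P Q Q.
Proof.
by exists 0, 1; apply: vec3_eq; rewrite /vadd /vscale /v1 /v2 /v3 /=; ring.
Qed.

(* Cramer's rule for S in the plane of P and Q. *)
Lemma in_span_of_det3_eq0 P Q S V : det3 P Q V != 0 -> det3 P Q S = 0 ->
  in_span P Q S.
Proof.
move=> dV dS; exists (det3 S Q V / det3 P Q V), (det3 P S V / det3 P Q V).
have cramer (x p q v : R[i]) : det3 P Q V * x =
    det3 S Q V * p + det3 P S V * q + det3 P Q S * v ->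
  x = det3 S Q V / det3 P Q V * p + det3 P S V / det3 P Q V * q.
  by rewrite dS mul0r addr0 => e; apply: (mulfI dV); rewrite e; field.
apply: vec3_eq; rewrite /vadd /vscale /v1 /v2 /v3 /=.
- apply: (cramer _ _ _ V.1.1); rewrite /det3 /v1 /v2 /v3 /=; ring.
- apply: (cramer _ _ _ V.1.2); rewrite /det3 /v1 /v2 /v3 /=; ring.
- apply: (cramer _ _ _ V.2); rewrite /det3 /v1 /v2 /v3 /=; ring.
Qed.

Lemma in_span_sum_diff P Q S a : a != 0 -> in_span P Q S ->
  in_span (vadd P (vscale a Q)) (vadd P (vscale (- a) Q)) S.
Proof.
move=> a0 [b [c ->]]; exists (b / 2 + c / (2 * a)), (b / 2 - c / (2 * a)).
have h2 : (2 : R[i]) != 0 by rewrite pnatr_eq0.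
apply: vec3_eq; rewrite /vadd /vscale /v1 /v2 /v3 /=;
  by field; rewrite ?h2 ?a0 ?mulf_neq0.
Qed.

(* For null P, Q the vectors P + aQ and P - aQ, where a = <P,Q>, are orthogonal
   with Hermitian squares 2|a|^2 and -2|a|^2. *)
Lemma sig11_basis_of_null P Q : herm P P = 0 -> herm Q Q = 0 -> herm P Q != 0 ->
  sig11_basis (vadd P (vscale (herm P Q) Q)) (vadd P (vscale (- herm P Q) Q)).
Proof.
move=> hP hQ a0.
rewrite /sig11_basis !(herm_addl, herm_addr, herm_scalel, herm_scaler) hP hQ
  (herm_sym P Q) rmorphN /=.
have n_gt0 : 0 < 2 * (herm P Q * (herm P Q)^*).
  by rewrite mulr_gt0 ?ltr0n // mul_conjC_gt0.
split; first by ring.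
split; first by rewrite [X in 0 < X](_ : _ = 2 * (herm P Q * (herm P Q)^*)) //;
  ring.
by rewrite [X in X < 0](_ : _ = - (2 * (herm P Q * (herm P Q)^*))) ?oppr_lt0 //;
  ring.
Qed.

Lemma chain_of_null_pair P Q : null_lift P -> null_lift Q -> distinct_pts P Q ->
  exists e1 e2, sig11_basis e1 e2 /\ forall S, in_span e1 e2 S <-> det3 P Q S = 0.
Proof.
move=> nP nQ PQ; have aPQ := null_herm_neq0 nP nQ PQ.
have [[_ hP] [Q0 hQ]] := (nP, nQ); have [V dV] := det3_neq0_of_distinct Q0 PQ.
have spanP := in_span_sum_diff aPQ (in_span_l P Q).
have spanQ := in_span_sum_diff aPQ (in_span_r P Q).
exists (vadd P (vscale (herm P Q) Q)), (vadd P (vscale (- herm P Q) Q)).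
split=> [|S]; first exact: sig11_basis_of_null.
split=> [|dS]; first exact: det3_in_span.
exact/in_span_sum_diff/(in_span_of_det3_eq0 dV).
Qed.

Lemma on_chain3_det3 P Q S : null_lift P -> null_lift Q -> distinct_pts P Q ->
  on_chain3 P Q S <-> det3 P Q S = 0.
Proof.
move=> nP nQ PQ; split=> [[e1 [e2 [_ [hP [hQ hS]]]]] | dS].
  exact: det3_in_span hP hQ hS.
have [e1 [e2 [b span]]] := chain_of_null_pair nP nQ PQ.
exists e1, e2; split=> //.
by split; [|split]; apply/span => //; rewrite /det3; ring.
Qed.

Lemma on_chain4_det3 P Q S T : null_lift P -> null_lift Q -> distinct_pts P Q ->
  on_chain4 P Q S T <-> det3 P Q S = 0 /\ det3 P Q T = 0.
Proof.
move=> nP nQ PQ; split=> [[e1 [e2 [_ [hP [hQ [hS hT]]]]]] | [dS dT]].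
  by split; apply: det3_in_span hP hQ _.
have [e1 [e2 [b span]]] := chain_of_null_pair nP nQ PQ.
by exists e1, e2; do !split=> //; apply/span => //; rewrite /det3; ring.
Qed.

Lemma det3_eq0_of_pivot P Q S T : Q <> (0, 0, 0) -> distinct_pts P Q ->
  det3 P Q S = 0 -> det3 P Q T = 0 ->
  forall X Y Z, X \in [:: P; Q; S; T] -> Y \in [:: P; Q; S; T] ->
    Z \in [:: P; Q; S; T] -> det3 X Y Z = 0.
Proof.
move=> Q0 PQ dS dT; have [V dV] := det3_neq0_of_distinct Q0 PQ.
have span X : X \in [:: P; Q; S; T] -> in_span P Q X.
  by rewrite !inE => /or4P[] /eqP ->; [exact: in_span_l | exact: in_span_r
    | exact: in_span_of_det3_eq0 dV dS | exact: in_span_of_det3_eq0 dV dT].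
by move=> X Y Z /span hX /span hY /span hZ; apply: det3_in_span hX hY hZ.
Qed.

Lemma det3_eq0_of_two_triples P1 P2 P3 P4 :
  P2 <> (0, 0, 0) -> P3 <> (0, 0, 0) -> P4 <> (0, 0, 0) ->
  distinct_pts P1 P2 -> distinct_pts P1 P3 -> distinct_pts P1 P4 ->
  distinct_pts P2 P3 -> distinct_pts P2 P4 -> distinct_pts P3 P4 ->
  (det3 P1 P2 P3 = 0 /\ det3 P1 P2 P4 = 0) \/
  (det3 P1 P2 P3 = 0 /\ det3 P1 P3 P4 = 0) \/
  (det3 P1 P2 P3 = 0 /\ det3 P2 P3 P4 = 0) \/
  (det3 P1 P2 P4 = 0 /\ det3 P1 P3 P4 = 0) \/
  (det3 P1 P2 P4 = 0 /\ det3 P2 P3 P4 = 0) \/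
  (det3 P1 P3 P4 = 0 /\ det3 P2 P3 P4 = 0) ->
  det3 P1 P2 P3 = 0 /\ det3 P1 P2 P4 = 0 /\ det3 P1 P3 P4 = 0 /\ det3 P2 P3 P4 = 0.
Proof.
move=> nz2 nz3 nz4 d12 d13 d14 d23 d24 d34.
have flip P Q S : det3 P Q S = 0 -> det3 P S Q = 0.
  by move=> h; rewrite det3_swap23 h oppr0.
have cyc P Q S : det3 P Q S = 0 -> det3 Q S P = 0 by move=> h; rewrite det3_cycle.
case=> [[h h']|[[h h']|[[h h']|[[h h']|[[h h']|[h h']]]]]];
  [ move: (det3_eq0_of_pivot nz2 d12 h h')
  | move: (det3_eq0_of_pivot nz3 d13 (flip _ _ _ h) h')
  | move: (det3_eq0_of_pivot nz3 d23 (cyc _ _ _ h) h')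
  | move: (det3_eq0_of_pivot nz4 d14 (flip _ _ _ h) (flip _ _ _ h'))
  | move: (det3_eq0_of_pivot nz4 d24 (cyc _ _ _ h) (flip _ _ _ h'))
  | move: (det3_eq0_of_pivot nz4 d34 (cyc _ _ _ h) (cyc _ _ _ h')) ] => H;
  by do !split; apply: H; rewrite !inE eqxx ?orbT.
Qed.

End Chains.

Section CartanVarieties.
Variable R : realType.

Lemma expiN (t : R) : expi (- t) = (expi t)^*.
Proof. by rewrite /expi cosN sinN. Qed.

Lemma is_arg_expi (w : R[i]) (t : R) :
  is_arg w t -> w != 0 -> expi t = `|w|^-1 * w.
Proof. by move=> hw w0; rewrite {2}hw mulKf // normr_eq0. Qed.

Lemma crossX_conj_triple (P1 P2 P3 P4 : vec3 R) :
  herm P1 P4 != 0 -> herm P2 P3 != 0 ->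
  (crossX P1 P2 P3 P4)^* * triple P1 P2 P3
  = (`|herm P1 P3| / `|herm P1 P4|) ^+ 2 * triple P1 P2 P4.
Proof.
move=> n14 n23.
have n14' : (herm P1 P4)^* != 0 by rewrite conjC_eq0.
have n23' : (herm P2 P3)^* != 0 by rewrite conjC_eq0.
rewrite /crossX /triple expr_div_n !normCK (herm_sym P1 P3) (herm_sym P2 P4)
  (herm_sym P1 P4) (herm_sym P2 P3) fmorph_div !rmorphM /= !conjCK.
field; rewrite ?n14 ?n23 ?n14' ?n23' //.
Qed.

Lemma crossX_conj_triple_conj (P1 P2 P3 P4 : vec3 R) :
  herm P1 P4 != 0 -> herm P2 P3 != 0 ->
  (crossX P1 P3 P2 P4)^* * (triple P1 P2 P3)^*
  = (`|herm P1 P2| / `|herm P1 P4|) ^+ 2 * triple P1 P3 P4.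
Proof.
move=> n14 n23.
have n14' : (herm P1 P4)^* != 0 by rewrite conjC_eq0.
have n23' : (herm P2 P3)^* != 0 by rewrite conjC_eq0.
rewrite /crossX /triple expr_div_n !normCK (herm_sym P1 P2) (herm_sym P3 P4)
  (herm_sym P1 P4) (herm_sym P1 P3) fmorph_div !rmorphM /= !conjCK.
field; rewrite ?n14 ?n23 ?n14' ?n23' //.
Qed.

Lemma crossX_crossX_conj_triple_conj (P1 P2 P3 P4 : vec3 R) :
  herm P1 P4 != 0 -> herm P2 P3 != 0 ->
  crossX P1 P2 P3 P4 * (crossX P1 P3 P2 P4)^* * (triple P1 P2 P3)^*
  = (`|herm P1 P2| * `|herm P1 P3| / (`|herm P1 P4| * `|herm P2 P3|)) ^+ 2
    * triple P2 P3 P4.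
Proof.
move=> n14 n23.
have n14' : (herm P1 P4)^* != 0 by rewrite conjC_eq0.
have n23' : (herm P2 P3)^* != 0 by rewrite conjC_eq0.
rewrite /crossX /triple expr_div_n !exprMn !normCK (herm_sym P1 P2)
  (herm_sym P1 P3) (herm_sym P1 P4) (herm_sym P2 P3) (herm_sym P2 P4) (herm_sym P3 P4)
  fmorph_div !rmorphM /= !conjCK.
field; rewrite ?n14 ?n23 ?n14' ?n23' //.
Qed.

Lemma cartan_varieties_triple (P1 P2 P3 P4 : vec3 R) (A : R) :
  herm P1 P2 != 0 -> herm P1 P3 != 0 -> herm P1 P4 != 0 -> herm P2 P3 != 0 ->
  cartanA_is P1 P2 P3 A ->
  let X1 := crossX P1 P2 P3 P4 in
  let X2 := crossX P1 P3 P2 P4 in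
  [/\ S123 X1 X2 A <-> 'Re (triple P1 P2 P3) = 0,
      S124 X1 X2 A <-> 'Re (triple P1 P2 P4) = 0,
      S134 X1 X2 A <-> 'Re (triple P1 P3 P4) = 0 &
      S234 X1 X2 A <-> 'Re (triple P2 P3 P4) = 0].
Proof.
move=> n12 n13 n14 n23 hA X1 X2.
set T := triple P1 P2 P3.
have T0 : T != 0 by rewrite /T /triple (herm_sym P1 P3) !mulf_neq0 ?conjC_eq0.
have eA : expi A = - `|T|^-1 * T.
  by rewrite (is_arg_expi hA) ?oppr_eq0 // normrN mulrN mulNr.
have eA' : expi (- A) = - `|T|^-1 * T^*.
  rewrite expiN eA rmorphM rmorphN /= fmorphV.
  by congr (- _^-1 * _); exact: conj_normC.
have c_real : - `|T|^-1 \is Num.real by rewrite rpredN rpredV normr_real.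
have c0 : - `|T|^-1 != 0 by rewrite oppr_eq0 invr_eq0 normr_eq0.
have Re_cM (r z : R[i]) : r \is Num.real -> r != 0 ->
    'Re (- `|T|^-1 * r * z) = 0 <-> 'Re z = 0.
  move=> r_real r0; apply: Re_realMl_eq0; first exact: rpredM.
  exact: mulf_neq0.
split.
- by rewrite /S123 eA; apply: Re_realMl_eq0.
- rewrite /S124 eA mulrCA crossX_conj_triple // mulrA; apply: Re_cM.
    by rewrite rpredX // rpredM ?rpredV ?normr_real.
  by rewrite expf_neq0 // mulf_neq0 ?invr_eq0 ?normr_eq0.
- rewrite /S134 eA' mulrCA crossX_conj_triple_conj // mulrA; apply: Re_cM.
    by rewrite rpredX // rpredM ?rpredV ?normr_real.
  by rewrite expf_neq0 // mulf_neq0 ?invr_eq0 ?normr_eq0.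
- rewrite /S234 eA' mulrCA crossX_crossX_conj_triple_conj // mulrA.
  apply: Re_cM.
    by rewrite rpredX // rpredM ?rpredV ?rpredM ?normr_real.
  by rewrite expf_neq0 // !mulf_neq0 ?invr_eq0 ?mulf_neq0 ?normr_eq0.
Qed.

End CartanVarieties.

Unset Implicit Arguments.

Theorem proposition3p3 (R : realType) (P1 P2 P3 P4 : vec3 R) (A : R) :
  null_lift P1 -> null_lift P2 -> null_lift P3 -> null_lift P4 ->
  distinct_pts P1 P2 -> distinct_pts P1 P3 -> distinct_pts P1 P4 ->
  distinct_pts P2 P3 -> distinct_pts P2 P4 -> distinct_pts P3 P4 ->
  cartanA_is P1 P2 P3 A ->
  let X1 := crossX P1 P2 P3 P4 in
  let X2 := crossX P1 P3 P2 P4 in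
  ((on_chain3 P1 P2 P3 \/ on_chain3 P1 P2 P4 \/ on_chain3 P1 P3 P4 \/ on_chain3 P2 P3 P4)
     <-> (S123 X1 X2 A \/ S124 X1 X2 A \/ S134 X1 X2 A \/ S234 X1 X2 A))
  /\
  (on_chain4 P1 P2 P3 P4
     <-> ((S123 X1 X2 A /\ S124 X1 X2 A) \/ (S123 X1 X2 A /\ S134 X1 X2 A) \/
          (S123 X1 X2 A /\ S234 X1 X2 A) \/ (S124 X1 X2 A /\ S134 X1 X2 A) \/
          (S124 X1 X2 A /\ S234 X1 X2 A) \/ (S134 X1 X2 A /\ S234 X1 X2 A))).
Proof.
move=> n1 n2 n3 n4 d12 d13 d14 d23 d24 d34 hA X1 X2; subst X1 X2.
have [[_ h1] [P20 h2]] := (n1, n2); have [[P30 h3] [P40 h4]] := (n3, n4).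
have [S123E S124E S134E S234E] := cartan_varieties_triple (P4 := P4)
  (null_herm_neq0 n1 n2 d12) (null_herm_neq0 n1 n3 d13)
  (null_herm_neq0 n1 n4 d14) (null_herm_neq0 n2 n3 d23) hA.
have D123 := null_det3_eq0 h1 h2 h3; have D124 := null_det3_eq0 h1 h2 h4.
have D134 := null_det3_eq0 h1 h3 h4; have D234 := null_det3_eq0 h2 h3 h4.
have C123 := on_chain3_det3 P3 n1 n2 d12.
have C124 := on_chain3_det3 P4 n1 n2 d12.
have C134 := on_chain3_det3 P4 n1 n3 d13.
have C234 := on_chain3_det3 P4 n2 n3 d23.
have C1234 := on_chain4_det3 P3 P4 n1 n2 d12.
have := det3_eq0_of_two_triples P20 P30 P40 d12 d13 d14 d23 d24 d34.
clear -S123E S124E S134E S234E D123 D124 D134 D234 C123 C124 C134 C234 C1234.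
tauto.
Qed.
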